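(* Let $\varepsilon,\gamma>0$ and $\delta>0$, and let $d\geq \frac{1}{(2\varepsilon+\gamma)^{1/\gamma}}$. There is a ReLU neural network of depth $7$, width $\mathcal O(d^{\max(4\varepsilon+2\gamma,1)})$ and magnitude of weights bounded by $1/\delta$ which, given any $(d,\varepsilon)$-sparse vector $\mathbf{x}'\in\mathcal S^d_\delta$ as input, returns a vector $\mathbf{x}''$ of dimension $d^{\varepsilon}$ containing all the non-zero entries of $\mathbf{x}'$, padded with $0$'s if $\mathbf{x}'$ has fewer than $d^{\varepsilon}$ non-zero entries.
   Context: A vector $\mathbf{x}\in\mathbb{R}^d$ is $(d,\varepsilon)$-sparse if it has at most $d^{\varepsilon}$ non-zero entries. $\mathcal S^d_\delta$ is the set of vectors $\mathbf{x}\in\mathbb{R}^d$ whose non-zero entries all lie in $[\delta,1-\delta]$ and are pairwise at distance at least $\delta$. A ReLU network applies $[z]_+=\max\{0,z\}$ after each affine hidden map, with an affine output layer; depth is the number of hidden layers plus one; width is the number of neurons in the largest hidden layer. *)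

From HB Require Import structures.
From mathcomp Require Import all_boot all_order all_algebra.
From mathcomp Require Import all_classical all_reals all_analysis.
Set Implicit Arguments. Unset Strict Implicit. Unset Printing Implicit Defensive.
Import Order.TTheory GRing.Theory Num.Theory.
Local Open Scope ring_scope.

Section ReLU.
Variable R : realType.

Definition relu_vec (n : nat) (v : 'cV[R]_n) : 'cV[R]_n :=
  \col_i Num.max 0 (v i 0).

Inductive relu_net : nat -> nat -> Type :=
| OutLayer (n m : nat) : 'M[R]_(m, n) -> 'cV[R]_m -> relu_net n m
| HidLayer (n h m : nat) : 'M[R]_(h, n) -> 'cV[R]_h -> relu_net h m -> relu_net n m.

Fixpoint net_eval (n m : nat) (N : relu_net n m) : 'cV[R]_n -> 'cV[R]_m :=
  match N in relu_net n m return 'cV[R]_n -> 'cV[R]_m with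
  | OutLayer _ _ W b => fun x => W *m x + b
  | HidLayer _ _ _ W b N' => fun x => net_eval N' (relu_vec (W *m x + b))
  end.

Fixpoint net_depth (n m : nat) (N : relu_net n m) : nat :=
  match N with
  | OutLayer _ _ _ _ => 1%N
  | HidLayer _ _ _ _ _ N' => (net_depth N').+1
  end.

Fixpoint net_width (n m : nat) (N : relu_net n m) : nat :=
  match N with
  | OutLayer _ _ _ _ => 0%N
  | @HidLayer _ h _ _ _ N' => maxn h (net_width N')
  end.

Fixpoint net_weights_bounded (B : R) (n m : nat) (N : relu_net n m) : Prop :=
  match N with
  | OutLayer _ _ W b => (forall i j, `|W i j| <= B) /\ (forall i, `|b i 0| <= B)
  | HidLayer _ _ _ W b N' =>
      [/\ (forall i j, `|W i j| <= B), (forall i, `|b i 0| <= B)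
        & net_weights_bounded B N']
  end.

End ReLU.

Definition nnz (R : realType) (d : nat) (x : 'cV[R]_d) : nat :=
  #|[set i | x i 0 != 0]|.

Definition sparse (R : realType) (d : nat) (eps : R) (x : 'cV[R]_d) : Prop :=
  (nnz x)%:R <= (d%:R) `^ eps.

Definition in_S (R : realType) (d : nat) (delta : R) (x : 'cV[R]_d) : Prop :=
  (forall i, x i 0 != 0 -> delta <= x i 0 <= 1 - delta) /\
  (forall i j, i != j -> x i 0 != 0 -> x j 0 != 0 -> delta <= `|x i 0 - x j 0|).

Definition compacts (R : realType) (d k : nat) (x : 'cV[R]_d) (y : 'cV[R]_k) : Prop :=
  exists sigma : 'I_d -> 'I_k,
    {in [set i | x i 0 != 0] &, injective sigma} /\
    (forall i, x i 0 != 0 -> y (sigma i) 0 = x i 0) /\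
    (forall j, (forall i, x i 0 != 0 -> sigma i != j) -> y j 0 = 0).

(* A perfect hash family does the routing.  By counting, there are [L = O(k log d)]
   functions [[d] -> [q]], [q = 2 k^2 + 1], such that every set of at most [k] coordinates
   is hashed injectively by one of them; the network evaluates all of them at once.  As
   non-zero entries lie in [[delta, 1]], [x / delta - relu (x / delta - 1)] is the indicator
   of [x <> 0]; this counts the non-zero entries in each bucket [(l, v)] and so detects the
   first collision-free [l], whose clipped bucket sums are the non-zero entries of [x].
   Bucket [v] is then sent to output [j] when the number of occupied buckets before [v] is
   [j], using that [relu (t + D) - relu (t + D - 1) - relu D + relu (D - 1)] is [t] for
   [D = 0] and [0] for every other integer [D], when [0 <= t <= 1].  The widest layers have
   [O(d + k^3 log d)] neurons, and [k^3 log d = O(d^(3 eps + gamma))]. *)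

From HB Require Import structures.
From mathcomp Require Import all_boot all_order all_algebra.
From mathcomp Require Import all_classical all_reals all_analysis.
From mathcomp Require Import ring lra zify.
Import Order.TTheory GRing.Theory Num.Theory.
Set Implicit Arguments. Unset Strict Implicit. Unset Printing Implicit Defensive.

Lemma card_bigcup_le (I T : finType) (P : pred I) (F : I -> {set T}) :
  #|\bigcup_(i | P i) F i| <= \sum_(i | P i) #|F i|.
Proof.
elim/big_ind2: _ => [|m A n B leA leB|//]; first by rewrite cards0.
by rewrite (leq_trans (leq_card_setU A B)) // leq_add.
Qed.

Lemma card_small_sets (T : finType) (k : nat) :
  #|[set S : {set T} | #|S| <= k]| <= #|T|.+1 ^ k.
Proof.
pose set_of (g : {ffun 'I_k -> option T}) : {set T} := [set x | Some x \in codom g].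
have covered :
    [set S : {set T} | #|S| <= k] \subset set_of @: [set: {ffun 'I_k -> option T}].
  apply/fintype.subsetP => S; rewrite inE => leSk.
  pose g : {ffun 'I_k -> option T} := [ffun a : 'I_k => nth None (map Some (enum S)) a].
  apply/imsetP; exists g => //; apply/setP => x; rewrite inE.
  apply/idP/codomP => [xS|[a]].
    have ltxk : index x (enum S) < k by rewrite (leq_trans _ leSk) // cardE index_mem mem_enum.
    by exists (Ordinal ltxk); rewrite ffunE (nth_map x) ?nth_index ?index_mem ?mem_enum.
  rewrite ffunE; case: (ltnP a (size (enum S))) => [lta|gea]; last first.
    by rewrite nth_default ?size_map.
  by rewrite (nth_map x) // => -[->]; rewrite -mem_enum mem_nth.
rewrite (leq_trans (subset_leq_card covered)) // (leq_trans (leq_imset_card _ _)) //.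
by rewrite cardsT card_ffun card_option card_ord.
Qed.

Section PerfectHash.
Variables (T : finType) (q : nat).
Local Notation hash := {ffun T -> 'I_q}.

(* Overwriting the value at [j] is injective on functions with [f i = f j]. *)
Lemma card_hash_collision (i j : T) : i != j ->
  #|[set f : hash | f i == f j]| * q <= q ^ #|T|.
Proof.
move=> neq_ij.
pose override (p : hash * 'I_q) : hash := [ffun x => if x == j then p.2 else p.1 x].
have -> : #|[set f : hash | f i == f j]| * q =
          #|finset.setX [set f : hash | f i == f j] [set: 'I_q]|.
  by rewrite cardsX cardsT card_ord.
rewrite -(card_in_imset (f := override)); last first.
  move=> [f c] [f' c']; rewrite !inE /= => /andP[/eqP fij _] /andP[/eqP fij' _] E.
  have Ex x : override (f, c) x = override (f', c') x by rewrite E.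
  have := Ex j; rewrite !ffunE eqxx /= => <-; congr pair; apply/ffunP => x.
  have := Ex x; rewrite !ffunE /=; case: (eqVneq x j) => [-> _|//].
  by rewrite -fij -fij'; have := Ex i; rewrite !ffunE (negbTE neq_ij).
by rewrite (leq_trans (max_card _)) // card_ffun !card_ord.
Qed.

Lemma card_hash_not_injective (S : {set T}) :
  #|[set f : hash | ~~ dinjectiveb f S]| * q <= #|S| ^ 2 * q ^ #|T|.
Proof.
pose pairs := [pred p : T * T | (p \in finset.setX S S) && (p.1 != p.2)].
have cover : [set f : hash | ~~ dinjectiveb f S] \subset
             \bigcup_(p | pairs p) [set f : hash | f p.1 == f p.2].
  apply/fintype.subsetP => f; rewrite inE => /dinjectivePn[i iS [j]].
  rewrite inE => /andP[neq_ji jS] fij; apply/bigcupP; exists (i, j).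
    by rewrite /= inE iS jS eq_sym.
  by rewrite inE fij.
rewrite (leq_trans (leq_mul (subset_leq_card cover) (leqnn q))) //.
rewrite (leq_trans (leq_mul (card_bigcup_le _ _) (leqnn q))) // big_distrl /=.
rewrite (@leq_trans (\sum_(p | pairs p) q ^ #|T|)) //.
  by apply: leq_sum => p /andP[_ /card_hash_collision].
rewrite sum_nat_const leq_mul2r -mulnn -cardsX; apply/orP; right.
by apply/subset_leq_card/fintype.subsetP => p /andP[].
Qed.

End PerfectHash.

(* For a fixed [S], at most half of the hashes collide on [S] (as [2 |S|^2 < q]), so at
   most a [2^-L] fraction of the families fail on [S]; and there are at most [2^(L-1)]
   such sets [S]. *)
Lemma exists_perfect_hash_family (T : finType) (k : nat) :
  exists fam : 'I_(k * (trunc_log 2 #|T|.+1).+1).+1 -> T -> 'I_(2 * k ^ 2).+1,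
  forall S : {set T}, #|S| <= k -> exists l, {in S &, injective (fam l)}.
Proof.
set L := (k * _).+1; set q := (2 * k ^ 2).+1.
pose hash := {ffun T -> 'I_q}.
pose bad S := [set f : hash | ~~ dinjectiveb f S].
pose small := [set S : {set T} | #|S| <= k].
pose bad_fam :=
  \bigcup_(S in small) [set fam : {ffun 'I_L -> hash} | fam \in ffun_on (mem (bad S))].
have bad_half S : S \in small -> 2 * #|bad S| <= q ^ #|T|.
  rewrite inE => leSk; rewrite -(leq_pmul2r (ltn0Sn (2 * k ^ 2))) -mulnA.
  rewrite (leq_trans (leq_mul (leqnn 2) (card_hash_not_injective q S))) //.
  rewrite mulnA [in leqRHS]mulnC leq_mul2r; apply/orP; right.
  by rewrite /q ltnW // ltnS leq_mul2l leq_exp2r ?orbT.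
have card_bad_fam : #|bad_fam| < #|{ffun 'I_L -> hash}|.
  rewrite card_ffun card_ffun !card_ord -(ltn_pmul2l (expn_gt0 2 L)).
  rewrite (leq_ltn_trans (leq_mul (leqnn _) (card_bigcup_le _ _))) // big_distrr /=.
  apply: (@leq_ltn_trans (\sum_(S in small) (q ^ #|T|) ^ L)).
    apply: leq_sum => S smallS.
    rewrite (eq_card (B := ffun_on (mem (bad S)))) => [|?]; last by rewrite inE.
    by rewrite card_ffun_on card_ord -expnMn leq_exp2r // bad_half.
  rewrite sum_nat_const -expnM ltn_mul2r expn_gt0 /q /=.
  rewrite (leq_ltn_trans (card_small_sets T k)) // /L expnS [k * _]mulnC expnM.
  case: (posnP k) => [->|k_gt0]; first by rewrite !expn0.
  rewrite (@leq_ltn_trans ((2 ^ (trunc_log 2 #|T|.+1).+1) ^ k)) ?ltn_Pmull ?expn_gt0 //.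
  by rewrite leq_exp2r // ltnW // trunc_log_ltn.
have /card_gt0P[fam] : 0 < #|~: bad_fam| by rewrite -(ltn_add2l #|bad_fam|) addn0 cardsC.
rewrite inE => fam_good; exists (fun l => fam l : T -> _) => S leSk.
have [l] : exists l, fam l \notin bad S.
  apply/existsP; rewrite -negb_forall; apply: contra fam_good => /forallP all_bad.
  by apply/bigcupP; exists S; rewrite ?inE //; apply/ffun_onP.
by rewrite inE negbK => /dinjectiveP; exists l.
Qed.

Local Open Scope ring_scope.
Local Notation "b %:B" := ((b : bool)%:R) (at level 2, format "b %:B").

Section ReluGadgets.
Variable R : realFieldType.
Implicit Types (z t D : R) (b : bool) (m n : nat).

Definition relu z := Num.max 0 z.

Lemma ger0_relu z : 0 <= z -> relu z = z.
Proof. by move=> z_ge0; rewrite /relu max_r. Qed.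

Lemma ler0_relu z : z <= 0 -> relu z = 0.
Proof. by move=> z_le0; rewrite /relu max_l. Qed.

Lemma relu_natB1 n : relu (n%:R - 1) = n.-1%:R.
Proof.
case: n => [|n]; first by rewrite ler0_relu // sub0r lerN10.
by rewrite -natr1 addrK ger0_relu.
Qed.

Lemma natrB_pred n : n%:R - n.-1%:R = (0 < n)%:R :> R.
Proof. by case: n => [|n]; rewrite ?subr0 // -natr1 addrC addKr. Qed.

Lemma relu_indicator (delta z : R) : 0 < delta -> 0 <= z -> (z != 0 -> delta <= z) ->
  z / delta - relu (z / delta - 1) = (z != 0)%:R.
Proof.
move=> delta_gt0 z_ge0 z_ge_delta; case: (eqVneq z 0) => [->|/z_ge_delta le_delta_z].
  by rewrite mul0r ler0_relu ?subr0 // sub0r lerN10.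
by rewrite ger0_relu ?subr_ge0 ?ler_pdivlMr ?mul1r // opprB addrC subrK.
Qed.

Definition clip z := Num.min z 1.

Lemma clip_ge0 z : 0 <= z -> 0 <= clip z.
Proof. by move=> z_ge0; rewrite /clip le_min z_ge0 ler01. Qed.

Lemma clip_le1 z : clip z <= 1.
Proof. by rewrite /clip ge_min lexx orbT. Qed.

Lemma relu_clip z : 0 <= z -> relu (z - relu (z - 1)) = clip z.
Proof.
move=> z_ge0; rewrite /clip; case: (leP z 1) => [le_z1|lt1z].
  by rewrite (ler0_relu (z := z - 1)) ?subr_le0 // subr0 ger0_relu // min_l.
rewrite (ger0_relu (z := z - 1)) ?subr_ge0 ?ltW // opprB addrC subrK.
by rewrite ger0_relu // min_r // ltW.
Qed.

Lemma relu_gate b z : 0 <= z -> z <= 1 -> relu (b%:R + z - 1) = b%:R * z.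
Proof.
by case: b => z_ge0 z_le1 /=; [rewrite mul1r ger0_relu; lra | rewrite mul0r ler0_relu; lra].
Qed.

Lemma relu_select b n : relu (- b%:R - n%:R + 1) = (~~ b && (n == 0%N))%:R.
Proof.
have n_ge0 : 0 <= n%:R :> R by [].
case: b => /=; first by rewrite ler0_relu //; lra.
case: n n_ge0 => [|n] n_ge0; first by rewrite mulr0n oppr0 !add0r ger0_relu.
by rewrite ler0_relu // -natr1; lra.
Qed.

Definition spike t D := relu (t + D) - relu (t + D - 1) - relu D + relu (D - 1).

Lemma spike_natB t m n : 0 <= t -> t <= 1 ->
  spike t (m%:R - n%:R) = (m == n)%:R * t.
Proof.
move=> t_ge0 t_le1; rewrite /spike; case: (ltngtP m n) => [lt_mn|lt_nm|->].
- have : m%:R + 1 <= n%:R :> R by rewrite natr1 ler_nat.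
  by move=> ?; rewrite !ler0_relu ?mul0r; lra.
- have : n%:R + 1 <= m%:R :> R by rewrite natr1 ler_nat.
  by move=> ?; rewrite !ger0_relu ?mul0r; lra.
- by rewrite subrr addr0 mul1r ger0_relu // !ler0_relu //; lra.
Qed.

End ReluGadgets.

Section FinIndexedNet.
Variable R : realType.

Definition fin_index (T : finType) : 'I_#|T| -> T := @enum_val T (pred_of_simpl predT).

Lemma fin_index_bij (T : finType) : bijective (@fin_index T).
Proof. exact: enum_val_bij. Qed.

Definition vec_of n (A : Type) (s : 'I_n -> A) (u : A -> R) : 'cV[R]_n := \col_j u (s j).

Definition fin_matrix m n (A B : Type) (sb : 'I_m -> B) (sa : 'I_n -> A)
  (w : B -> A -> R) : 'M[R]_(m, n) := \matrix_(i, j) w (sb i) (sa j).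

Definition relu_layer (A B : finType) (w : B -> A -> R) (c : B -> R) (u : A -> R) (b : B) :=
  relu (\sum_a w b a * u a + c b).

Definition fin_hidden n m (A B : finType) (sa : 'I_n -> A) (w : B -> A -> R) (c : B -> R)
  (N : relu_net R #|B| m) : relu_net R n m :=
  HidLayer (fin_matrix (@fin_index B) sa w) (vec_of (@fin_index B) c) N.

Definition fin_output n k (A : finType) (sa : 'I_n -> A) (w : 'I_k -> A -> R) (c : 'I_k -> R) :
  relu_net R n k := OutLayer (fin_matrix id sa w) (vec_of id c).

Lemma fin_affineE m n (A : finType) (B : Type) (sb : 'I_m -> B) (sa : 'I_n -> A)
    (w : B -> A -> R) (c : B -> R) (u : A -> R) : bijective sa ->
  fin_matrix sb sa w *m vec_of sa u + vec_of sb c =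
  vec_of sb (fun b => \sum_a w b a * u a + c b).
Proof.
move=> [sa' saK sa'K]; apply/matrixP => i j; rewrite !mxE (reindex sa) /=.
  by under eq_bigr do rewrite !mxE.
by exists sa' => a _.
Qed.

Lemma net_eval_fin_hidden n m (A B : finType) (sa : 'I_n -> A) w c (N : relu_net R #|B| m) u :
  bijective sa ->
  net_eval (fin_hidden sa w c N) (vec_of sa u) =
  net_eval N (vec_of (@fin_index B) (relu_layer w c u)).
Proof.
by move=> sa_bij /=; rewrite fin_affineE //; congr net_eval; apply/matrixP => i j; rewrite !mxE.
Qed.

Lemma net_eval_fin_output n k (A : finType) (sa : 'I_n -> A) w c u : bijective sa ->
  net_eval (fin_output (k := k) sa w c) (vec_of sa u) =
  vec_of id (fun j => \sum_a w j a * u a + c j).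
Proof. exact: fin_affineE. Qed.

Lemma fin_hidden_bounded n m (A B : finType) (sa : 'I_n -> A) w c (N : relu_net R #|B| m) Bd :
  (forall b a, `|w b a| <= Bd) -> (forall b, `|c b| <= Bd) -> net_weights_bounded Bd N ->
  net_weights_bounded Bd (fin_hidden sa w c N).
Proof. by move=> w_le c_le N_le; split => *; rewrite ?mxE. Qed.

Lemma fin_output_bounded n k (A : finType) (sa : 'I_n -> A) (w : 'I_k -> A -> R) c Bd :
  (forall j a, `|w j a| <= Bd) -> (forall j, `|c j| <= Bd) ->
  net_weights_bounded Bd (fin_output sa w c).
Proof. by move=> w_le c_le; split => *; rewrite ?mxE. Qed.

Fixpoint zero_net n m p : relu_net R n m :=
  if p is p'.+1 then HidLayer (0 : 'M[R]_(0, n)) 0 (zero_net 0 m p') else OutLayer 0 0.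

Lemma zero_net_eval n m p x : net_eval (zero_net n m p) x = 0.
Proof. by elim: p n x => [|p IHp] n x /=; rewrite ?mul0mx ?addr0. Qed.

Lemma zero_net_depth n m p : net_depth (zero_net n m p) = p.+1.
Proof. by elim: p n => [|p IHp] n //=; rewrite IHp. Qed.

Lemma zero_net_width n m p : net_width (zero_net n m p) = 0%N.
Proof. by elim: p n => [|p IHp] n //=; rewrite IHp. Qed.

Lemma zero_net_bounded n m p Bd : 0 <= Bd -> net_weights_bounded Bd (zero_net n m p).
Proof.
move=> Bd_ge0; elim: p n => [|p IHp] n /=; first by split => *; rewrite mxE normr0.
by split => // -[].
Qed.

End FinIndexedNet.

Section IndicatorSums.
Variable R : pzRingType.
Implicit Types (T A B : finType).

Lemma sum_mul0l T (G : T -> R) : \sum_a 0 * G a = 0.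
Proof. by rewrite big1 // => a _; rewrite mul0r. Qed.

Lemma sum_indicator T (P : pred T) (G : T -> R) : \sum_a (P a)%:B * G a = \sum_(a | P a) G a.
Proof. by rewrite [RHS]big_mkcond; apply: eq_bigr => a _; case: (P a); rewrite ?mul1r ?mul0r. Qed.

Lemma sum_indicator_eq T (b : T) (G : T -> R) : \sum_a (a == b)%:B * G a = G b.
Proof. by rewrite sum_indicator big_pred1_eq. Qed.

Lemma sum_indicator_eqN T (b : T) (G : T -> R) : \sum_a - (a == b)%:B * G a = - G b.
Proof. by rewrite -(sum_indicator_eq b) -sumrN; apply: eq_bigr => a _; rewrite mulNr. Qed.

Lemma sum_indicator_mul T (P Q : pred T) :
  \sum_a (P a)%:B * (Q a)%:B = #|[set a | P a && Q a]|%:R :> R.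
Proof.
rewrite -sum1dep_card natr_sum [RHS]big_mkcond; apply: eq_bigr => a _.
by case: (P a); case: (Q a); rewrite ?mul1r ?mul0r.
Qed.

Lemma sum_pair_snd A B (P : pred B) (G : A * B -> R) :
  \sum_(p : A * B) (P p.2)%:B * G p = \sum_b (P b)%:B * \sum_a G (a, b).
Proof.
transitivity (\sum_a \sum_b (P b)%:B * G (a, b)).
  by rewrite pair_bigA; apply: eq_bigr => -[].
by rewrite exchange_big; apply: eq_bigr => b _; rewrite mulr_sumr.
Qed.

Lemma sum_pair_snd_eq A B (b0 : B) (G : A * B -> R) :
  \sum_(p : A * B) (p.2 == b0)%:B * G p = \sum_a G (a, b0).
Proof. by rewrite (sum_pair_snd (pred1 b0)) sum_indicator_eq. Qed.

Lemma sum_pair_snd_eqN A B (b0 : B) (G : A * B -> R) :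
  \sum_(p : A * B) - (p.2 == b0)%:B * G p = - \sum_a G (a, b0).
Proof.
by rewrite -sum_pair_snd_eq -sumrN; apply: eq_bigr => p _; rewrite mulNr.
Qed.

Lemma sum_pair_fst_eq A B (a0 : A) (G : A * B -> R) :
  \sum_(p : A * B) (p.1 == a0)%:B * G p = \sum_b G (a0, b).
Proof.
transitivity (\sum_a \sum_b (a == a0)%:B * G (a, b)).
  by rewrite pair_bigA; apply: eq_bigr => -[].
rewrite -(sum_indicator_eq a0 (fun a => \sum_b G (a, b))).
by apply: eq_bigr => a _; rewrite mulr_sumr.
Qed.

Lemma sum_ord_ltn n (j : 'I_n) : \sum_(l < n) (l < j)%N%:B = j%:R :> R.
Proof.
rewrite (eq_bigr (fun l : 'I_n => (l < j)%N%:B * 1)) => [|l _]; last by rewrite mulr1.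
rewrite sum_indicator -(big_ord_widen _ (fun=> (1 : R)) (ltnW (ltn_ord j))).
by rewrite sumr_const card_ord.
Qed.

End IndicatorSums.

Lemma exists_first n (P : pred 'I_n) : (exists l, P l) ->
  exists l0, forall l, P l && (#|[set l' : 'I_n | (l' < l)%N & P l']| == 0%N) = (l == l0).
Proof.
move=> [l1 Pl1]; case: (arg_minnP (fun l : 'I_n => nat_of_ord l) Pl1) => l0 Pl0 min_l0.
exists l0 => l; case: (eqVneq l l0) => [->|neq_l].
  rewrite Pl0 cards_eq0 /=; apply/eqP/setP => l'; rewrite !inE.
  by apply/negP => /andP[lt_l' /min_l0]; rewrite leqNgt lt_l'.
apply/negbTE; rewrite negb_and -lt0n card_gt0; case: (boolP (P l)) => //= Pl.
apply/set0Pn; exists l0; rewrite inE Pl0 ltn_neqAle min_l0 // !andbT.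
by apply: contra neq_l => /eqP/val_inj ->.
Qed.

Section RankIn.
Variable q : nat.
Implicit Types (O : {set 'I_q}) (v w : 'I_q).

Definition rank_in O v := #|[set w in O | (w < v)%N]|.

Lemma rank_in_ltn O v w : v \in O -> (v < w)%N -> (rank_in O v < rank_in O w)%N.
Proof.
move=> vO lt_vw; apply: proper_card; apply/properP; split.
  by apply/fintype.subsetP => u; rewrite !inE => /andP[-> /ltn_trans->].
by exists v; rewrite !inE ?vO ?ltnn ?lt_vw.
Qed.

Lemma rank_in_inj O : {in O &, injective (rank_in O)}.
Proof.
move=> v w vO wO eq_rank; apply: val_inj; case: (ltngtP v w) => // [lt_vw|lt_wv].
  by have := rank_in_ltn vO lt_vw; rewrite eq_rank ltnn.
by have := rank_in_ltn wO lt_wv; rewrite eq_rank ltnn.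
Qed.

Lemma rank_in_lt_card O v : v \in O -> (rank_in O v < #|O|)%N.
Proof.
move=> vO; apply: proper_card; apply/properP; split.
  by apply/fintype.subsetP => u; rewrite inE => /andP[].
by exists v; rewrite // inE ltnn andbF.
Qed.

End RankIn.

Definition supp (R : realType) d (x : 'cV[R]_d) : {set 'I_d} := [set i | x i 0 != 0].

Lemma compacts_by_rank (R : realType) d k q (x : 'cV[R]_d) (y : 'cV[R]_k)
    (h : 'I_d -> 'I_q) (s : 'I_q -> R) :
  (0 < k)%N -> (#|supp x| <= k)%N -> {in supp x &, injective h} ->
  (forall i, i \in supp x -> s (h i) = x i 0) ->
  (forall v, v \notin h @: supp x -> s v = 0) ->
  (forall j, y j 0 = \sum_v (rank_in (h @: supp x) v == j)%:B * s v) ->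
  compacts x y.
Proof.
set O := h @: supp x => k_gt0 supp_le h_inj s_supp s_out y_eq.
have hO i : i \in supp x -> h i \in O by move=> iS; apply: imset_f.
have rank_lt i : i \in supp x -> (rank_in O (h i) < k)%N.
  move=> iS; rewrite (leq_trans (rank_in_lt_card (hO i iS))) //.
  exact: leq_trans (leq_imset_card _ _) supp_le.
pose sigma i := insubd (Ordinal k_gt0) (rank_in O (h i)).
have sigmaE i : i \in supp x -> sigma i = rank_in O (h i) :> nat.
  by move=> iS; rewrite val_insubd rank_lt.
have y_out j v : (forall i, i \in supp x -> sigma i != j) -> (rank_in O v == j)%:B * s v = 0.
  move=> sigma_neq; case: (boolP (v \in O)) => [/imsetP[i iS ->]|/s_out ->]; last first.
    by rewrite mulr0.
  by have := sigma_neq i iS; rewrite -(inj_eq (@ord_inj k)) sigmaE // => /negbTE ->; rewrite mul0r.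
exists sigma; split; [|split].
- move=> i i' iS i'S /(congr1 (@nat_of_ord k)); rewrite !sigmaE // => /rank_in_inj eq_h.
  by apply: h_inj => //; apply: eq_h; apply: hO.
- move=> i nz_i; have iS : i \in supp x by rewrite inE.
  rewrite y_eq (bigD1 (h i)) //= sigmaE // eqxx mul1r s_supp // big1 ?addr0 // => v neq_v.
  case: (boolP (v \in O)) => [vO|/s_out ->]; last by rewrite mulr0.
  rewrite (_ : (_ == _) = false) ?mul0r //.
  by apply: contra_neqF neq_v => /eqP/rank_in_inj; apply; rewrite ?hO.
- by move=> j sigma_neq; rewrite y_eq big1 // => v _; apply: y_out => i; rewrite inE => /sigma_neq.
Qed.

Lemma compacts0 (R : realType) d k : (0 < k)%N -> compacts (0 : 'cV[R]_d) (0 : 'cV[R]_k).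
Proof.
move=> k_gt0; exists (fun => Ordinal k_gt0).
by split; [|split] => [i j|i|j _]; rewrite ?inE !mxE ?eqxx.
Qed.

Lemma in_S_eq0 (R : realType) d (delta : R) (x : 'cV[R]_d) : 1 < 2 * delta -> in_S delta x -> x = 0.
Proof.
move=> delta_gt [x_range _]; apply/matrixP => i j; rewrite mxE ord1.
by apply/eqP/negP => /negP/x_range; lra.
Qed.

Section CompactionNet.
Variables (R : realType) (delta : R) (d k L q : nat) (hash : 'I_L -> 'I_d -> 'I_q).
Local Notation bucket := ('I_L * 'I_q)%type.
Local Notation in_bucket p i := (hash p.1 i == p.2).

Definition neurons1 := ('I_d + 'I_d + bucket)%type.
Local Notation Input1 i := (inl (inl i)) (only parsing).
Local Notation Excess1 i := (inl (inr i)) (only parsing).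
Local Notation Overflow1 p := (inr p) (only parsing).

Definition weight1 (b : neurons1) (i : 'I_d) : R :=
  match b with
  | Input1 j => (i == j)%:B
  | Excess1 j => (i == j)%:B / delta
  | Overflow1 p => (in_bucket p i)%:B
  end.
Definition bias1 (b : neurons1) : R := if b is Input1 _ then 0 else -1.

Definition neurons2 := (bucket + bucket + bucket)%type.
Local Notation Count2 p := (inl (inl p)) (only parsing).
Local Notation CountPred2 p := (inl (inr p)) (only parsing).
Local Notation Clip2 p := (inr p) (only parsing).

Definition weight2 (b : neurons2) (a : neurons1) : R :=
  match b, a with
  | Count2 p, Input1 i | CountPred2 p, Input1 i => (in_bucket p i)%:B / delta
  | Count2 p, Excess1 i | CountPred2 p, Excess1 i => - (in_bucket p i)%:B
  | Clip2 p, Input1 i => (in_bucket p i)%:B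
  | Clip2 p, Overflow1 p' => - (p' == p)%:B
  | _, _ => 0
  end.
Definition bias2 (b : neurons2) : R := if b is CountPred2 _ then -1 else 0.

(* A constant neuron [One3 l] per [l] (and [One5 j] per [j]) lets [#|{l' | l' < l}|] (and
   [j]) arise as sums of unit weights, which keeps all weights within [1 / delta]. *)
Definition neurons3 := ('I_L + 'I_L + bucket + bucket + 'I_L)%type.
Local Notation Collisions3 l := (inl (inl (inl (inl l)))) (only parsing).
Local Notation CollisionsPred3 l := (inl (inl (inl (inr l)))) (only parsing).
Local Notation Occupied3 p := (inl (inl (inr p))) (only parsing).
Local Notation Clip3 p := (inl (inr p)) (only parsing).
Local Notation One3 l := (inr l) (only parsing).

Definition weight3 (b : neurons3) (a : neurons2) : R :=
  match b, a with
  | Collisions3 l, CountPred2 p | CollisionsPred3 l, CountPred2 p => (p.1 == l)%:B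
  | Occupied3 p, Count2 p' => (p' == p)%:B
  | Occupied3 p, CountPred2 p' => - (p' == p)%:B
  | Clip3 p, Clip2 p' => (p' == p)%:B
  | _, _ => 0
  end.
Definition bias3 (b : neurons3) : R :=
  match b with CollisionsPred3 _ => -1 | One3 _ => 1 | _ => 0 end.

Definition neurons4 := ('I_L + bucket + bucket)%type.
Local Notation Selected4 l := (inl (inl l)) (only parsing).
Local Notation Occupied4 p := (inl (inr p)) (only parsing).
Local Notation Clip4 p := (inr p) (only parsing).

Definition weight4 (b : neurons4) (a : neurons3) : R :=
  match b, a with
  | Selected4 l, Collisions3 l' => if l' == l then -1 else (l' < l)%N%:B
  | Selected4 l, CollisionsPred3 l' => if l' == l then 1 else - (l' < l)%N%:B
  | Selected4 l, One3 l' => - (l' < l)%N%:B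
  | Occupied4 p, Occupied3 p' => (p' == p)%:B
  | Clip4 p, Clip3 p' => (p' == p)%:B
  | _, _ => 0
  end.
Definition bias4 (b : neurons4) : R := if b is Selected4 _ then 1 else 0.

Definition neurons5 := (bucket + bucket + 'I_k)%type.
Local Notation SelClip5 p := (inl (inl p)) (only parsing).
Local Notation SelOccupied5 p := (inl (inr p)) (only parsing).
Local Notation One5 j := (inr j) (only parsing).

Definition weight5 (b : neurons5) (a : neurons4) : R :=
  match b, a with
  | SelClip5 p, Selected4 l | SelOccupied5 p, Selected4 l => (l == p.1)%:B
  | SelClip5 p, Clip4 p' | SelOccupied5 p, Occupied4 p' => (p' == p)%:B
  | _, _ => 0
  end.
Definition bias5 (b : neurons5) : R := if b is One5 _ then 1 else -1.

Definition neurons6 := ('I_q * 'I_k + 'I_q * 'I_k + 'I_q * 'I_k + 'I_q * 'I_k)%type.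
Local Notation ValShift6 p := (inl (inl (inl p))) (only parsing).
Local Notation ValShiftPred6 p := (inl (inl (inr p))) (only parsing).
Local Notation Shift6 p := (inl (inr p)) (only parsing).
Local Notation ShiftPred6 p := (inr p) (only parsing).

Definition value_weight (v : 'I_q) (a : neurons5) : R :=
  if a is SelClip5 p then (p.2 == v)%:B else 0.
Definition shift_weight (vj : 'I_q * 'I_k) (a : neurons5) : R :=
  match a with
  | SelClip5 _ => 0
  | SelOccupied5 p => (p.2 < vj.1)%N%:B
  | One5 j => - (j < vj.2)%N%:B
  end.

Definition weight6 (b : neurons6) (a : neurons5) : R :=
  match b with
  | ValShift6 vj | ValShiftPred6 vj => value_weight vj.1 a + shift_weight vj a
  | Shift6 vj | ShiftPred6 vj => shift_weight vj a
  end.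
Definition bias6 (b : neurons6) : R :=
  match b with ValShiftPred6 _ | ShiftPred6 _ => -1 | _ => 0 end.

Definition weight7 (j : 'I_k) (b : neurons6) : R :=
  match b with
  | ValShift6 vj | ShiftPred6 vj => (vj.2 == j)%:B
  | ValShiftPred6 vj | Shift6 vj => - (vj.2 == j)%:B
  end.

Definition compaction_net : relu_net R d k :=
  fin_hidden id weight1 bias1 (fin_hidden (@fin_index _) weight2 bias2
  (fin_hidden (@fin_index _) weight3 bias3 (fin_hidden (@fin_index _) weight4 bias4
  (fin_hidden (@fin_index _) weight5 bias5 (fin_hidden (@fin_index _) weight6 bias6
  (fin_output (@fin_index _) weight7 (fun => 0))))))).

Section Bounded.
Hypotheses (delta_gt0 : 0 < delta) (delta_le1 : delta <= 1).

Ltac case_sums := repeat match goal with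
  | x : ?T |- _ => let T' := eval hnf in T in
                   match T' with (_ + _)%type => destruct x end
  end.

Lemma compaction_net_bounded : net_weights_bounded (1 / delta) compaction_net.
Proof.
have one_le : 1 <= 1 / delta by rewrite ler_pdivlMr // mul1r.
have bool_le (b : bool) : `|b%:B| <= 1 / delta :> R.
  by case: b; rewrite ?normr1 ?normr0 // (le_trans ler01).
have opp_bool_le (b : bool) : `|- b%:B| <= 1 / delta :> R by rewrite normrN.
have bool_div_le (b : bool) : `|b%:B / delta| <= 1 / delta :> R.
  by case: b; [rewrite ger0_norm // divr_ge0 // ltW | rewrite mul0r normr0 (le_trans ler01)].
have zero_le : `|0 : R| <= 1 / delta by rewrite normr0 (le_trans ler01).
have one_norm_le : `|1 : R| <= 1 / delta by rewrite normr1.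
have opp_one_le : `|-1 : R| <= 1 / delta by rewrite normrN.
repeat (apply: fin_hidden_bounded || apply: fin_output_bounded);
  move=> *; case_sums; rewrite /= ?addr0 ?add0r; try case: ifP => _; by [].
Qed.

End Bounded.

Section Eval.
Hypothesis delta_gt0 : 0 < delta.
Variable x : 'cV[R]_d.
Hypothesis x_range : forall i, x i 0 != 0 -> delta <= x i 0 <= 1 - delta.

Let x_ge0 i : 0 <= x i 0.
Proof.
case: (eqVneq (x i 0) 0) => [->//|/x_range/andP[le_delta _]].
exact: le_trans (ltW delta_gt0) le_delta.
Qed.

Let x_le1 i : x i 0 <= 1.
Proof.
case: (eqVneq (x i 0) 0) => [->//|/x_range/andP[_ le_x]].
by apply: le_trans le_x _; rewrite lerBlDr lerDl ltW.
Qed.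

Definition bucket_sum (p : bucket) := \sum_(i | in_bucket p i) x i 0.
Definition bucket_count (p : bucket) := #|[set i | in_bucket p i & x i 0 != 0]|.
Definition collisions (l : 'I_L) := (\sum_v (bucket_count (l, v)).-1)%N.
Definition collision_free l := collisions l == 0%N.
Definition selected l :=
  collision_free l && (#|[set l' : 'I_L | (l' < l)%N & collision_free l']| == 0%N).
Definition selected_value v : R := \sum_l (selected l)%:B * clip (bucket_sum (l, v)).
Definition selected_rank (v : 'I_q) : R :=
  \sum_(w : 'I_q) (w < v)%N%:B * \sum_l (selected l)%:B * (0 < bucket_count (l, w))%N%:B.

Lemma bucket_sum_ge0 p : 0 <= bucket_sum p.
Proof. by apply: sumr_ge0 => i _; apply: x_ge0. Qed.

Definition act1 := relu_layer weight1 bias1 (fun i => x i 0).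
Definition act2 := relu_layer weight2 bias2 act1.
Definition act3 := relu_layer weight3 bias3 act2.
Definition act4 := relu_layer weight4 bias4 act3.
Definition act5 := relu_layer weight5 bias5 act4.
Definition act6 := relu_layer weight6 bias6 act5.

Lemma act1_input i : act1 (Input1 i) = x i 0.
Proof. by rewrite /act1 /relu_layer /= addr0 sum_indicator_eq ger0_relu ?x_ge0. Qed.

Lemma act1_excess i : act1 (Excess1 i) = relu (x i 0 / delta - 1).
Proof.
rewrite /act1 /relu_layer /=; under eq_bigr do rewrite mulrAC.
by rewrite -mulr_suml sum_indicator_eq.
Qed.

Lemma act1_overflow p : act1 (Overflow1 p) = relu (bucket_sum p - 1).
Proof. by rewrite /act1 /relu_layer /= sum_indicator. Qed.

Lemma layer1_count p : \sum_i (in_bucket p i)%:B / delta * act1 (Input1 i) +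
    \sum_i - (in_bucket p i)%:B * act1 (Excess1 i) = (bucket_count p)%:R.
Proof.
rewrite -big_split -sum_indicator_mul; apply: eq_bigr => i _ /=.
rewrite act1_input act1_excess mulNr -mulrAC -mulrA -mulrBr relu_indicator ?x_ge0 //.
by move=> /x_range/andP[].
Qed.

Lemma act2_count p : act2 (Count2 p) = (bucket_count p)%:R.
Proof. by rewrite /act2 /relu_layer !big_sumType /= sum_mul0l !addr0 layer1_count ger0_relu. Qed.

Lemma act2_count_pred p : act2 (CountPred2 p) = (bucket_count p).-1%:R.
Proof. by rewrite /act2 /relu_layer !big_sumType /= sum_mul0l addr0 layer1_count relu_natB1. Qed.

Lemma act2_clip p : act2 (Clip2 p) = clip (bucket_sum p).
Proof.
rewrite /act2 /relu_layer !big_sumType /= sum_mul0l !addr0 sum_indicator sum_indicator_eqN.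
by rewrite act1_overflow (eq_bigr _ (fun i _ => act1_input i)) relu_clip ?bucket_sum_ge0.
Qed.

Lemma act3_collisions l : act3 (Collisions3 l) = (collisions l)%:R.
Proof.
rewrite /act3 /relu_layer !big_sumType /= !sum_mul0l add0r !addr0 sum_pair_fst_eq.
by rewrite (eq_bigr _ (fun v _ => act2_count_pred (l, v))) -natr_sum ger0_relu.
Qed.

Lemma act3_collisions_pred l : act3 (CollisionsPred3 l) = (collisions l).-1%:R.
Proof.
rewrite /act3 /relu_layer !big_sumType /= !sum_mul0l add0r !addr0 sum_pair_fst_eq.
by rewrite (eq_bigr _ (fun v _ => act2_count_pred (l, v))) -natr_sum relu_natB1.
Qed.

Lemma act3_occupied p : act3 (Occupied3 p) = (0 < bucket_count p)%N%:B.
Proof.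
rewrite /act3 /relu_layer !big_sumType /= sum_mul0l !addr0 sum_indicator_eq sum_indicator_eqN.
by rewrite act2_count act2_count_pred natrB_pred ger0_relu.
Qed.

Lemma act3_clip p : act3 (Clip3 p) = clip (bucket_sum p).
Proof.
rewrite /act3 /relu_layer !big_sumType /= !sum_mul0l !add0r addr0 sum_indicator_eq act2_clip.
by rewrite ger0_relu // clip_ge0 ?bucket_sum_ge0.
Qed.

Lemma act3_one l : act3 (One3 l) = 1.
Proof. by rewrite /act3 /relu_layer !big_sumType /= !sum_mul0l !add0r ger0_relu. Qed.

Lemma act4_selected l : act4 (Selected4 l) = (selected l)%:B.
Proof.
rewrite /act4 /relu_layer !big_sumType /= !sum_mul0l !addr0 -!big_split /=.
(* The input is [1 - [l collides] - #|{l' < l | l' collision-free}|]. *)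
rewrite (eq_bigr (fun l' : 'I_L => - (l' == l)%:B * (~~ collision_free l')%:B +
                            - ((l' < l)%N%:B * (collision_free l')%:B))) => [|l' _].
  rewrite big_split /= sum_indicator_eqN sumrN sum_indicator_mul.
  by rewrite relu_select negbK.
rewrite act3_collisions act3_collisions_pred act3_one mulr1 /collision_free.
have -> : (collisions l')%:R = (collisions l').-1%:R + (collisions l' != 0%N)%:B :> R.
  by rewrite -lt0n -natrB_pred addrC subrK.
case: (collisions l' == 0%N); case: (eqVneq l' l) => [->|_]; rewrite ?ltnn /=;
  try case: (l' < l)%N; rewrite /=; lra.
Qed.

Lemma act4_occupied p : act4 (Occupied4 p) = (0 < bucket_count p)%N%:B.
Proof.
rewrite /act4 /relu_layer !big_sumType /= !sum_mul0l !addr0 !add0r sum_indicator_eq.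
by rewrite act3_occupied ger0_relu.
Qed.

Lemma act4_clip p : act4 (Clip4 p) = clip (bucket_sum p).
Proof.
rewrite /act4 /relu_layer !big_sumType /= !sum_mul0l !addr0 !add0r sum_indicator_eq.
by rewrite act3_clip ger0_relu // clip_ge0 ?bucket_sum_ge0.
Qed.

Lemma act5_sel_clip p : act5 (SelClip5 p) = (selected p.1)%:B * clip (bucket_sum p).
Proof.
rewrite /act5 /relu_layer !big_sumType /= !sum_mul0l !addr0 !sum_indicator_eq.
by rewrite act4_selected act4_clip relu_gate ?clip_le1 ?clip_ge0 ?bucket_sum_ge0.
Qed.

Lemma act5_sel_occupied p :
  act5 (SelOccupied5 p) = (selected p.1)%:B * (0 < bucket_count p)%N%:B.
Proof.
rewrite /act5 /relu_layer !big_sumType /= !sum_mul0l !addr0 !sum_indicator_eq.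
by rewrite act4_selected act4_occupied relu_gate //; case: (0 < _)%N.
Qed.

Lemma act5_one j : act5 (One5 j) = 1.
Proof. by rewrite /act5 /relu_layer !big_sumType /= !sum_mul0l !add0r ger0_relu. Qed.

Lemma layer5_value v : \sum_a value_weight v a * act5 a = selected_value v.
Proof.
rewrite !big_sumType /= !sum_mul0l !addr0.
by rewrite (eq_bigr _ (fun p _ => congr1 _ (act5_sel_clip p))) sum_pair_snd_eq.
Qed.

Lemma layer5_shift vj : \sum_a shift_weight vj a * act5 a = selected_rank vj.1 - vj.2%:R.
Proof.
rewrite !big_sumType /= sum_mul0l add0r.
rewrite (eq_bigr _ (fun p _ => congr1 _ (act5_sel_occupied p))).
rewrite (sum_pair_snd (fun w : 'I_q => (w < vj.1)%N)).
rewrite (eq_bigr _ (fun j _ => congr1 _ (act5_one j))).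
by rewrite -sum_ord_ltn -sumrN; congr (_ + _); apply: eq_bigr => j _; rewrite mulNr mulr1.
Qed.

Lemma act6_val_shift vj :
  act6 (ValShift6 vj) = relu (selected_value vj.1 + (selected_rank vj.1 - vj.2%:R)).
Proof.
rewrite /act6 /relu_layer /= addr0 -layer5_value -layer5_shift -big_split /=.
by under eq_bigr do rewrite mulrDl.
Qed.

Lemma act6_val_shift_pred vj :
  act6 (ValShiftPred6 vj) = relu (selected_value vj.1 + (selected_rank vj.1 - vj.2%:R) - 1).
Proof.
rewrite /act6 /relu_layer /= -layer5_value -layer5_shift -big_split /=.
by under eq_bigr do rewrite mulrDl.
Qed.

Lemma act6_shift vj : act6 (Shift6 vj) = relu (selected_rank vj.1 - vj.2%:R).
Proof. by rewrite /act6 /relu_layer /= addr0 layer5_shift. Qed.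

Lemma act6_shift_pred vj : act6 (ShiftPred6 vj) = relu (selected_rank vj.1 - vj.2%:R - 1).
Proof. by rewrite /act6 /relu_layer /= layer5_shift. Qed.

Lemma compaction_net_eval j :
  net_eval compaction_net x j 0 =
  \sum_(v : 'I_q) spike (selected_value v) (selected_rank v - j%:R).
Proof.
have -> : x = vec_of id (fun i => x i 0) by apply/matrixP => i j'; rewrite mxE ord1.
rewrite /compaction_net net_eval_fin_hidden; last by exists id.
rewrite !net_eval_fin_hidden ?fin_index_bij // net_eval_fin_output ?fin_index_bij // mxE.
rewrite -/act1 -/act2 -/act3 -/act4 -/act5 -/act6 !big_sumType /= addr0.
rewrite !sum_pair_snd_eq !sum_pair_snd_eqN -!sumrN -!big_split /=.
by apply: eq_bigr => v _; rewrite act6_val_shift act6_val_shift_pred act6_shift act6_shift_pred.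
Qed.

Lemma collision_freeP l : reflect {in supp x &, injective (hash l)} (collision_free l).
Proof.
rewrite /collision_free /collisions sum_nat_eq0.
apply: (iffP forallP) => [cnt_le1 i i' iS i'S eq_h | inj_l v].
  rewrite inE in iS; rewrite inE in i'S.
  move: (cnt_le1 (hash l i)); rewrite /= -subn1 subn_eq0 => /card_le1_eqP.
  by apply; rewrite inE /= ?iS ?i'S -?eq_h eqxx.
rewrite /= -subn1 subn_eq0; apply/card_le1_eqP => i i'; rewrite !inE.
by move=> /andP[/eqP hi nz_i] /andP[/eqP hi' nz_i']; apply: inj_l; rewrite ?inE // hi hi'.
Qed.

Lemma occupied_image l : [set w | (0 < bucket_count (l, w))%N] = hash l @: supp x.
Proof.
apply/setP => w; rewrite inE card_gt0; apply/set0Pn/imsetP => [[i]|[i iS ->]].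
  by rewrite inE /= => /andP[/eqP <- nz_i]; exists i; rewrite ?inE.
by exists i; rewrite inE /= eqxx; rewrite inE in iS.
Qed.

Lemma bucket_sum_out l v : v \notin hash l @: supp x -> bucket_sum (l, v) = 0.
Proof.
move=> v_out; rewrite /bucket_sum big1 // => i /eqP hi; apply/eqP.
by apply: contraNT v_out => nz_i; apply/imsetP; exists i; rewrite ?inE.
Qed.

Lemma bucket_sum_image l i : {in supp x &, injective (hash l)} -> i \in supp x ->
  bucket_sum (l, hash l i) = x i 0.
Proof.
move=> inj_l iS; rewrite /bucket_sum (bigD1 i) //= big1 ?addr0 // => i' /andP[/eqP hi' neq_i'].
by apply/eqP; apply: contraNT neq_i' => nz_i'; apply/eqP/inj_l => //; rewrite inE.
Qed.

Section Selected.
Variable l0 : 'I_L.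
Hypothesis selected_l0 : forall l, selected l = (l == l0).

Lemma selected_valueE v : selected_value v = clip (bucket_sum (l0, v)).
Proof.
by rewrite /selected_value; under eq_bigr do rewrite selected_l0; rewrite sum_indicator_eq.
Qed.

Lemma selected_rankE v :
  selected_rank v = (rank_in [set w | (0 < bucket_count (l0, w))%N] v)%:R.
Proof.
rewrite /selected_rank
  (eq_bigr (fun w : 'I_q => (w < v)%N%:B * (0 < bucket_count (l0, w))%N%:B)).
  by rewrite sum_indicator_mul; congr _%:R; apply: eq_card => w; rewrite !inE andbC.
by move=> w _; under eq_bigr do rewrite selected_l0; rewrite sum_indicator_eq.
Qed.

End Selected.

Theorem compaction_net_compacts : (0 < k)%N -> (#|supp x| <= k)%N ->
  (exists l, {in supp x &, injective (hash l)}) -> compacts x (net_eval compaction_net x).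
Proof.
move=> k_gt0 supp_le [l1 /collision_freeP free_l1].
have [l0 selected_l0] := exists_first (ex_intro _ l1 free_l1).
have /collision_freeP inj_l0 : collision_free l0.
  by have := selected_l0 l0; rewrite eqxx => /andP[].
apply: (compacts_by_rank (h := hash l0) (s := fun v => clip (bucket_sum (l0, v)))) => //.
- by move=> i iS; rewrite bucket_sum_image // /clip min_l ?x_le1.
- by move=> v v_out; rewrite bucket_sum_out // /clip min_l.
move=> j; rewrite compaction_net_eval -occupied_image; apply: eq_bigr => v _.
rewrite (selected_valueE selected_l0) (selected_rankE selected_l0).
by rewrite spike_natB ?clip_le1 ?clip_ge0 ?bucket_sum_ge0.
Qed.

End Eval.

End CompactionNet.

Lemma compaction_net_width (R : realType) (delta : R) d k t
    (hash : 'I_(k * t.+1).+1 -> 'I_d -> 'I_(2 * k ^ 2).+1) : (0 < k)%N ->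
  (net_width (compaction_net delta k hash) <= 2 * d + 18 * (k ^ 3 * t.+1))%N.
Proof.
move=> k_gt0; rewrite /= !card_sum !card_prod !card_ord !geq_max.
set T := t.+1; have T_gt0 : (0 < T)%N by [].
rewrite !expnS expn0 muln1.
repeat (apply/andP; split); nia.
Qed.

Section PowRBounds.
Variable R : realType.

(* [2 ^ t <= 2 d] and [g ln d <= d ^ g - 1], from [1 + y <= exp y]. *)
Lemma trunc_log2_le_powR (g : R) d : 0 < g -> (0 < d)%N ->
  (trunc_log 2 d.+1).+1%:R <= (2 + 1 / (g * ln 2)) * d%:R `^ g.
Proof.
move=> g_gt0 d_gt0; set t := trunc_log 2 d.+1; set D : R := d%:R.
have D_ge1 : 1 <= D by rewrite ler1n.
have D_gt0 : 0 < D by apply: lt_le_trans D_ge1.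
have ln2_gt0 : 0 < ln (2 : R) by rewrite ln_gt0 // ltr1n.
have t_ln2 : t%:R * ln 2 <= ln 2 + ln D.
  rewrite mulr_natl -lnXn // -lnM ?posrE ?ltr0n // ler_ln ?posrE ?exprn_gt0 ?mulr_gt0 //.
  by rewrite /D -natrX -natrM ler_nat (leq_trans (trunc_logP _ _)) //; lia.
have ln_le : 1 + g * ln D <= D `^ g.
  by rewrite -[D `^ g]lnK ?posrE ?powR_gt0 // ln_powR expR_ge1Dx.
have Dg_ge1 : 1 <= D `^ g by rewrite -(powRr0 D) ler_powR // ltW.
set c := g * ln 2; have c_gt0 : 0 < c by rewrite mulr_gt0.
have : t%:R - 1 <= D `^ g / c.
  rewrite ler_pdivlMr // /c mulrCA; apply: (@le_trans _ _ (g * ln D)); last by lra.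
  by rewrite ler_pM2l //; lra.
by rewrite mulrDl div1r [c^-1 * _]mulrC -natr1 => ?; lra.
Qed.

Lemma width_le_powR (eps g : R) d k :
  0 < eps -> 0 < g -> (0 < d)%N -> k%:R <= d%:R `^ eps ->
  (2 * d + 18 * (k ^ 3 * (trunc_log 2 d.+1).+1))%:R <=
  (2 + 18 * (2 + 1 / (g * ln 2))) * d%:R `^ Num.max (4 * eps + 2 * g) 1.
Proof.
move=> eps_gt0 g_gt0 d_gt0 k_le; set D : R := d%:R; set M := Num.max _ _.
set c := 2 + 1 / (g * ln 2).
have D_ge1 : 1 <= D by rewrite ler1n.
have c_ge0 : 0 <= c by rewrite addr_ge0 // divr_ge0 // ltW // mulr_gt0 // ln_gt0 // ltr1n.
have D_le : D <= D `^ M.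
  by rewrite -{1}(powRr1 (le_trans ler01 D_ge1)) ler_powR // le_max lexx orbT.
have k3_le : k%:R ^+ 3 <= D `^ (3 * eps).
  by rewrite mulrC powRrM powR_mulrn ?powR_ge0 // lerXn2r // ?nnegrE ?powR_ge0.
have pow_le : D `^ (3 * eps) * D `^ g <= D `^ M.
  rewrite -powRD; last by apply/implyP => _; rewrite gt_eqF // (lt_le_trans ltr01 D_ge1).
  by rewrite ler_powR // le_max; apply/orP; left; lra.
have X_le : (k ^ 3 * (trunc_log 2 d.+1).+1)%:R <= c * D `^ M.
  rewrite natrM natrX.
  rewrite (le_trans (ler_pM _ _ k3_le (trunc_log2_le_powR g_gt0 d_gt0))) ?exprn_ge0 //.
  by rewrite mulrCA ler_wpM2l.
move: X_le; set X := (k ^ 3 * _)%N => X_le.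
have -> : (2 * d + 18 * X)%:R = 2 * D + 18 * X%:R :> R by rewrite natrD !natrM.
by rewrite [leRHS]mulrDl -(mulrA 18); lra.
Qed.

Lemma truncn_powR_gt0 (eps : R) d : 0 <= eps -> (0 < d)%N -> (0 < Num.truncn (d%:R `^ eps))%N.
Proof.
move=> eps_ge0 d_gt0; rewrite truncn_gt0; apply: (@le_trans _ _ (d%:R `^ 0)).
  by rewrite powRr0.
by rewrite ler_powR ?ler1n.
Qed.

End PowRBounds.

Theorem propositionD4 (R : realType) (eps gamma : R) :
  0 < eps -> 0 < gamma ->
  exists C : R, 0 < C /\
  forall (delta : R) (d : nat), 0 < delta -> (0 < d)%N ->
    1 / ((2 * eps + gamma) `^ (1 / gamma)) <= d%:R ->
    exists N : relu_net R d (Num.truncn ((d%:R : R) `^ eps)),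
      [/\ net_depth N = 7%N,
          (net_width N)%:R <= C * (d%:R `^ Num.max (4 * eps + 2 * gamma) 1),
          net_weights_bounded (1 / delta) N
        & forall x : 'cV[R]_d, sparse eps x -> in_S delta x ->
            compacts x (net_eval N x)].
Proof.
move=> eps_gt0 gamma_gt0; set c := 2 + 1 / (gamma * ln 2).
have c_ge0 : 0 <= c by rewrite addr_ge0 // divr_ge0 // ltW // mulr_gt0 // ln_gt0 // ltr1n.
exists (2 + 18 * c); split; first by lra.
move=> delta d delta_gt0 d_gt0 _; set k := Num.truncn _.
have k_le : k%:R <= d%:R `^ eps by rewrite truncn_le powR_ge0.
have k_gt0 : (0 < k)%N by apply: truncn_powR_gt0 => //; apply: ltW.
have [hash hash_inj] := exists_perfect_hash_family 'I_d k.
(* For [delta > 1] the unit weights are too large, but then [S^d_delta = {0}]. *)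
case: (lerP delta 1) => [delta_le1|delta_gt1].
  exists (compaction_net delta k hash); split => //.
  - apply: le_trans (width_le_powR eps_gt0 gamma_gt0 d_gt0 k_le); rewrite ler_nat.
    by apply: leq_trans (compaction_net_width _ _ k_gt0) _; rewrite card_ord.
  - exact: compaction_net_bounded.
  move=> x x_sparse [x_range _].
  have supp_le : (#|supp x| <= k)%N by rewrite /k truncn_ge_nat ?powR_ge0.
  exact: compaction_net_compacts (hash_inj _ supp_le).
exists (zero_net R d k 6); split; rewrite ?zero_net_depth ?zero_net_width //.
- by rewrite mulr_ge0 ?powR_ge0 //; lra.
- by apply: zero_net_bounded; rewrite divr_ge0 // ltW.
by move=> x _ /in_S_eq0 ->; [rewrite zero_net_eval; apply: compacts0 | lra].
Qed.
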